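(* Let $\lambda>1$, $s'\in(0,1]$, $r\in\mathbb{R}$, and consider the system $$x_{n+1}=s'y_n,\qquad y_{n+1}=x_n^{\lambda}e^{r-x_n},\qquad n\ge0,$$ with $(x_0,y_0)\in[0,\infty)^2$; equivalently $x_{n+1}=x_{n-1}^{\lambda}e^{a-x_{n-1}}$ for $n\ge1$ with $x_1=s'y_0$, where $a=r+\ln s'$. Let $f(u)=u^\lambda e^{a-u}$. (a) Every orbit in $[0,\infty)^2$ converges to $(0,0)$ if and only if $a<(\lambda-1)[1-\ln(\lambda-1)]$. (b) Assume $a>(\lambda-1)[1-\ln(\lambda-1)]$, and let $u^*<\bar u$ be the two positive fixed points of $f$. Then the positive fixed points of the scalar equation are $x^*=u^*$ and $\bar x=\bar u$, and every orbit with $(x_0,y_0)\in[0,u^* )\times[0,u^*/s')$ converges to $(0,0)$. (c) Assume $(\lambda-1)[1-\ln(\lambda-1)]<a\le\lambda-(\lambda-1)\ln\lambda$. If $x_0\in[u^*,\bar u]$ or $s'y_0\in[u^*,\bar u]$, then the corresponding orbit does not converge to $(0,0)$. (d) Assume $a>(\lambda-1)[1-\ln(\lambda-1)]$. Then the 2-periodic sequences $\{0,u^*,0,u^*,\dots\}$ and $\{u^*,0,u^*,0,\dots\}$ are solutions of $x_{n+1}=x_{n-1}^{\lambda}e^{a-x_{n-1}}$ and they are unstable: for every $\delta>0$ there are non-negative initial values $(x_0,x_1)$ within distance $\delta$ of $(0,u^* )$ (respectively of $(u^*,0)$) whose solution converges to $0$.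
   Context: For $\lambda>1$ and $a>(\lambda-1)[1-\ln(\lambda-1)]$ the map $f(u)=u^{\lambda}e^{a-u}$ has exactly two positive fixed points $u^*<\lambda-1<\bar u$; $u^*$ is called the Allee fixed point of $f$. *)

From Stdlib Require Import Reals Lra.
Open Scope R_scope.

(* Real power with the convention 0^p = 0 for p > 0 (Stdlib's Rpower 0 p = 1). *)
Definition rpow (x p : R) : R := if Rle_dec x 0 then 0 else Rpower x p.

Fixpoint orbit (lam s r x0 y0 : R) (n : nat) : R * R :=
  match n with
  | O => (x0, y0)
  | S k => let (x, y) := orbit lam s r x0 y0 k in
           (s * y, rpow x lam * exp (r - x))
  end.

Definition conv_origin (lam s r x0 y0 : R) : Prop :=
  Un_cv (fun n => fst (orbit lam s r x0 y0 n)) 0 /\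
  Un_cv (fun n => snd (orbit lam s r x0 y0 n)) 0.

Definition fA (lam a u : R) : R := rpow u lam * exp (a - u).

Definition scalar_sol (lam a : R) (x : nat -> R) : Prop :=
  forall n : nat, x (S (S n)) = fA lam a (x n).

Definition scalar_fixed (lam a x : R) : Prop := 0 < x /\ scalar_sol lam a (fun _ => x).

From Stdlib Require Import Reals Lra Lia.
Open Scope R_scope.

(* Write f(u) = u exp g(u) with g(u) = (lam - 1) ln u + a - u.  As k ln u - u increases on
   (0, k] and decreases on [k, oo), g peaks at u = lam - 1 with value a - c.  If a < c then
   f(u) < u for every u > 0, so the iterates decrease to a limit which, by continuity, is a
   fixed point, hence 0; if a >= c then g has a zero and the corresponding constant orbit stays
   away from 0.  For a > c the two zeros us < lam - 1 < ub of g are the only positive fixed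
   points and f(u) < u on (0, us), which gives (b) and (d).  If moreover
   a <= lam - (lam - 1) ln lam then ub <= lam, f is increasing on (0, lam] and [us, ub]
   is invariant, which gives (c).  The planar system reduces to f because x_{n+2} = f(x_n)
   and y_n = x_{n+1} / s. *)

Definition ln_fA_ratio (lam a u : R) : R := (lam - 1) * ln u + a - u.

Section ScalarMap.

Variables lam a : R.

Lemma fA_exp u : 0 < u -> fA lam a u = exp (lam * ln u + a - u).
Proof.
  intros Hu. unfold fA, rpow. destruct (Rle_dec u 0); [lra|].
  unfold Rpower. rewrite <- exp_plus. f_equal. ring.
Qed.

Lemma fA_ratio u : 0 < u -> fA lam a u = u * exp (ln_fA_ratio lam a u).
Proof.
  intros Hu. rewrite fA_exp by exact Hu.
  replace (lam * ln u + a - u) with (ln u + ln_fA_ratio lam a u)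
    by (unfold ln_fA_ratio; ring).
  rewrite exp_plus, exp_ln by exact Hu. reflexivity.
Qed.

Lemma fA_0 : fA lam a 0 = 0.
Proof. unfold fA, rpow. destruct (Rle_dec 0 0); [ring | lra]. Qed.

Lemma fA_ge0 u : 0 <= fA lam a u.
Proof.
  destruct (Rle_lt_dec u 0) as [Hu | Hu].
  - unfold fA, rpow. destruct (Rle_dec u 0); [lra | contradiction].
  - rewrite fA_exp by exact Hu. left. apply exp_pos.
Qed.

Lemma fA_continuity_pt u : 0 < u -> continuity_pt (fA lam a) u.
Proof.
  intros Hu.
  apply (continuity_pt_locally_ext (fun v => exp (lam * ln v + a - v)) _ u u Hu).
  { intros v Hv. unfold Rdist in Hv. apply Rabs_def2 in Hv.
    symmetry. apply fA_exp. lra. }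
  apply (continuity_pt_comp (fun v => lam * ln v + a - v) exp).
  - apply continuity_pt_minus; [apply continuity_pt_plus|].
    + apply continuity_pt_mult; [apply continuity_pt_const; intros ??; reflexivity|].
      apply derivable_continuous_pt. exact (exist _ (/ u) (derivable_pt_lim_ln u Hu)).
    + apply continuity_pt_const. intros ??; reflexivity.
    + apply derivable_continuous_pt, derivable_pt_id.
  - apply derivable_continuous_pt, derivable_pt_exp.
Qed.

Lemma fA_lt_id_iff u : 0 < u -> (fA lam a u < u <-> ln_fA_ratio lam a u < 0).
Proof.
  intros Hu. rewrite fA_ratio by exact Hu. split; intros H.
  - apply exp_lt_inv. rewrite exp_0. nra.
  - apply exp_increasing in H. rewrite exp_0 in H. nra.
Qed.

Lemma fA_eq_id_iff u : 0 < u -> (fA lam a u = u <-> ln_fA_ratio lam a u = 0).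
Proof.
  intros Hu. rewrite fA_ratio by exact Hu. split; intros H.
  - apply exp_inv. rewrite exp_0. apply (Rmult_eq_reg_l u); lra.
  - rewrite H, exp_0. ring.
Qed.

End ScalarMap.

Lemma ln_sub_lt_increasing k u v : 0 < u -> u < v -> v <= k -> k * ln u - u < k * ln v - v.
Proof.
  intros Hu Huv Hvk. set (t := ln v - ln u).
  assert (Ht : 0 < t) by (pose proof (ln_increasing u v Hu Huv); unfold t; lra).
  assert (E : u = v * exp (- t)).
  { unfold t, Rminus. rewrite exp_Ropp, exp_plus, exp_Ropp, !exp_ln by lra. field; lra. }
  pose proof (exp_ineq1 (- t) ltac:(lra)).
  assert (v - u < t * v) by (rewrite E; nra).
  assert (t * v <= t * k) by nra.
  unfold t in *. lra.
Qed.

Lemma ln_sub_lt_decreasing k u v : 0 < u -> k <= u -> u < v -> k * ln v - v < k * ln u - u.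
Proof.
  intros Hu Hku Huv. set (t := ln v - ln u).
  assert (Ht : 0 < t) by (pose proof (ln_increasing u v Hu Huv); unfold t; lra).
  assert (E : v = u * exp t).
  { unfold t, Rminus. rewrite exp_plus, exp_Ropp, !exp_ln by lra. field; lra. }
  pose proof (exp_ineq1 t ltac:(lra)).
  assert (t * u < v - u) by (rewrite E; nra).
  assert (t * k <= t * u) by nra.
  unfold t in *. lra.
Qed.

Lemma ln_fA_ratio_le_peak lam a u : 1 < lam -> 0 < u ->
  ln_fA_ratio lam a u <= a - (lam - 1) * (1 - ln (lam - 1)).
Proof.
  intros Hlam Hu.
  replace (a - (lam - 1) * (1 - ln (lam - 1))) with (ln_fA_ratio lam a (lam - 1))
    by (unfold ln_fA_ratio; ring).
  unfold ln_fA_ratio.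
  destruct (Rtotal_order u (lam - 1)) as [H | [-> | H]].
  - pose proof (ln_sub_lt_increasing (lam - 1) u (lam - 1) Hu H ltac:(lra)). lra.
  - lra.
  - pose proof (ln_sub_lt_decreasing (lam - 1) (lam - 1) u ltac:(lra) ltac:(lra) H). lra.
Qed.

Lemma fA_fixed_point_exists lam a : 1 < lam -> (lam - 1) * (1 - ln (lam - 1)) <= a ->
  exists u, 0 < u /\ fA lam a u = u.
Proof.
  intros Hlam Ha.
  (* A zero [z] of [h] gives the fixed point [exp z], since [ln_fA_ratio lam a (exp z) = - h z]. *)
  set (h := fun t => exp t - (lam - 1) * t - a).
  set (t0 := ln (lam - 1)).
  assert (h_t0 : h t0 <= 0).
  { unfold h, t0. rewrite exp_ln by lra. nra. }
  set (T := 4 * lam + Rabs a + Rabs t0 + 1).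
  pose proof (Rle_abs a). pose proof (Rabs_pos a). pose proof (Rle_abs t0). pose proof (Rabs_pos t0).
  assert (T_ge : 4 * lam <= T /\ a <= T /\ t0 < T) by (unfold T; lra).
  assert (h_T : 0 < h T).
  { (* [exp T >= (1 + T/2)^2 >= 1 + T + lam T] because [T >= 4 lam]. *)
    assert (E : exp T = exp (T / 2) * exp (T / 2)) by (rewrite <- exp_plus; f_equal; field).
    pose proof (exp_ineq1_le (T / 2)).
    assert ((1 + T / 2) * (1 + T / 2) <= exp T) by (rewrite E; apply Rmult_le_compat; lra).
    assert (lam * T <= T * T / 4) by nra.
    unfold h. lra. }
  assert (Hz : exists z, h z = 0).
  { destruct (Req_dec (h t0) 0) as [Z | Z]; [now exists t0|].
    destruct (IVT h t0 T ltac:(unfold h; reg) ltac:(lra) ltac:(lra) h_T) as [z [_ Hz]].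
    now exists z. }
  destruct Hz as [z Hz]. exists (exp z). split; [apply exp_pos|].
  apply fA_eq_id_iff; [apply exp_pos|].
  unfold ln_fA_ratio. rewrite ln_exp. unfold h in Hz. lra.
Qed.

Lemma fA_le_increasing lam a u v : 0 < u -> u <= v -> v <= lam -> fA lam a u <= fA lam a v.
Proof.
  intros Hu Huv Hv. rewrite !fA_exp by lra.
  destruct (Req_dec u v) as [-> | Hne]; [lra|].
  pose proof (ln_sub_lt_increasing lam u v Hu ltac:(lra) Hv).
  left. apply exp_increasing. lra.
Qed.

Section TwoFixedPoints.

Variables lam a us ub : R.
Hypothesis us_gt0 : 0 < us.
Hypothesis us_lt_ub : us < ub.
Hypothesis fA_us : fA lam a us = us.
Hypothesis fA_ub : fA lam a ub = ub.

Let ratio_us : ln_fA_ratio lam a us = 0.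
Proof. now apply fA_eq_id_iff. Qed.

Let ratio_ub : ln_fA_ratio lam a ub = 0.
Proof. apply fA_eq_id_iff; [lra | exact fA_ub]. Qed.

Lemma allee_lt_peak : us < lam - 1.
Proof.
  destruct (Rlt_le_dec us (lam - 1)) as [|H]; [assumption|].
  pose proof (ln_sub_lt_decreasing (lam - 1) us ub us_gt0 H us_lt_ub).
  unfold ln_fA_ratio in *. lra.
Qed.

Lemma peak_lt_upper_fixed : lam - 1 < ub.
Proof.
  destruct (Rlt_le_dec (lam - 1) ub) as [|H]; [assumption|].
  pose proof (ln_sub_lt_increasing (lam - 1) us ub us_gt0 us_lt_ub H).
  unfold ln_fA_ratio in *. lra.
Qed.

Lemma fA_lt_id_below_allee u : 0 < u < us -> fA lam a u < u.
Proof.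
  intros Hu. apply fA_lt_id_iff; [lra|].
  pose proof (ln_sub_lt_increasing (lam - 1) u us ltac:(lra) ltac:(lra) (Rlt_le _ _ allee_lt_peak)).
  unfold ln_fA_ratio in *. lra.
Qed.

Lemma fA_eq_id_iff_two_fixed x : 0 < x -> (fA lam a x = x <-> x = us \/ x = ub).
Proof.
  intros Hx. split; [|intros [-> | ->]; assumption].
  intros Fx. apply fA_eq_id_iff in Fx; [|exact Hx].
  pose proof allee_lt_peak. pose proof peak_lt_upper_fixed.
  unfold ln_fA_ratio in *.
  destruct (Rle_or_lt x (lam - 1)) as [L | L].
  - left. destruct (Rtotal_order x us) as [M | [M | M]]; [|assumption|].
    + pose proof (ln_sub_lt_increasing (lam - 1) x us Hx M ltac:(lra)). lra.
    + pose proof (ln_sub_lt_increasing (lam - 1) us x us_gt0 M L). lra.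
  - right. destruct (Rtotal_order x ub) as [M | [M | M]]; [|assumption|].
    + pose proof (ln_sub_lt_decreasing (lam - 1) x ub Hx ltac:(lra) M). lra.
    + pose proof (ln_sub_lt_decreasing (lam - 1) ub x ltac:(lra) ltac:(lra) M). lra.
Qed.

Lemma upper_fixed_le_lam : 0 < lam -> a <= lam - (lam - 1) * ln lam -> ub <= lam.
Proof.
  intros Hlam Ha. destruct (Rle_or_lt ub lam) as [|L]; [assumption|].
  pose proof peak_lt_upper_fixed.
  pose proof (ln_sub_lt_decreasing (lam - 1) lam ub ltac:(lra) ltac:(lra) L).
  unfold ln_fA_ratio in *. lra.
Qed.

Lemma fA_maps_two_fixed_interval u : ub <= lam -> us <= u <= ub -> us <= fA lam a u <= ub.
Proof.
  intros Hub Hu. split.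
  - rewrite <- fA_us at 1. apply fA_le_increasing; lra.
  - rewrite <- fA_ub. apply fA_le_increasing; lra.
Qed.

End TwoFixedPoints.

Lemma Un_cv_even_odd (x : nat -> R) l :
  Un_cv (fun n => x (2 * n)%nat) l -> Un_cv (fun n => x (S (2 * n))) l -> Un_cv x l.
Proof.
  intros Heven Hodd eps Heps.
  destruct (Heven eps Heps) as [N1 H1]. destruct (Hodd eps Heps) as [N2 H2].
  exists (2 * (N1 + N2))%nat. intros n Hn.
  destruct (Nat.Even_or_Odd n) as [[k ->] | [k ->]].
  - apply H1. lia.
  - replace (2 * k + 1)%nat with (S (2 * k)) by lia. apply H2. lia.
Qed.

Lemma not_Un_cv_0_of_ge (x : nat -> R) n0 v :
  0 < v -> (forall k, v <= x (n0 + 2 * k)%nat) -> ~ Un_cv x 0.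
Proof.
  intros Hv Hge Hcv. destruct (Hcv v Hv) as [N HN].
  specialize (HN (n0 + 2 * N)%nat ltac:(lia)). specialize (Hge N).
  unfold R_dist in HN. rewrite Rminus_0_r, Rabs_right in HN by lra. lra.
Qed.

Lemma two_step_invariant (f : R -> R) (P : R -> Prop) (x : nat -> R) n0 :
  (forall u, P u -> P (f u)) -> (forall n, x (S (S n)) = f (x n)) ->
  P (x n0) -> forall k, P (x (n0 + 2 * k)%nat).
Proof.
  intros HP Hx H0 k. induction k as [|k IH].
  - now rewrite Nat.add_0_r.
  - replace (n0 + 2 * S k)%nat with (S (S (n0 + 2 * k))) by lia.
    rewrite Hx. now apply HP.
Qed.

Section IterationBelowIdentity.

Variables (f : R -> R) (M : R).
Hypothesis f_0 : f 0 = 0.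
Hypothesis f_ge0 : forall u, 0 <= f u.
Hypothesis f_lt_id : forall u, 0 < u < M -> f u < u.
Hypothesis f_cont : forall u, 0 < u < M -> continuity_pt f u.

(* A positive limit [L] of the decreasing iterates would be a fixed point below [M]. *)
Lemma iterate_cv_0 (v : nat -> R) :
  (forall n, v (S n) = f (v n)) -> 0 <= v 0%nat < M -> Un_cv v 0.
Proof.
  intros Hv H0.
  assert (step : forall u, 0 <= u < M -> 0 <= f u <= u).
  { intros u Hu. split; [apply f_ge0|].
    destruct (Rle_lt_or_eq_dec 0 u (proj1 Hu)) as [Hpos | <-].
    - left. now apply f_lt_id.
    - rewrite f_0. lra. }
  assert (bounds : forall n, 0 <= v n <= v 0%nat).
  { induction n as [|n IH]; [lra|]. rewrite Hv. pose proof (step (v n) ltac:(lra)). lra. }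
  assert (decr : Un_decreasing v).
  { intro n. rewrite Hv. pose proof (step (v n) ltac:(specialize (bounds n); lra)). lra. }
  assert (lb : has_lb v).
  { exists 0. intros y [n ->]. unfold opp_seq. specialize (bounds n). lra. }
  destruct (decreasing_cv v decr lb) as [L HL].
  assert (L_ge0 : 0 <= L).
  { apply (Rle_cv_lim (Un := fun _ => 0) (Vn := v)); [intro n; apply bounds| |exact HL].
    intros e He. exists O. intros. unfold R_dist. rewrite Rminus_diag, Rabs_R0. exact He. }
  assert (L_lt : L < M) by (pose proof (decreasing_ineq v L decr HL O); lra).
  destruct (Rle_lt_or_eq_dec 0 L L_ge0) as [L_gt0 | <-]; [exfalso | exact HL].
  assert (HfL : Un_cv (fun n => v (S n)) (f L)).
  { intros e He. destruct (continuity_seq f v L (f_cont L ltac:(lra)) HL e He) as [N HN].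
    exists N. intros n Hn. rewrite Hv. now apply HN. }
  assert (fix_L : f L = L).
  { apply (UL_sequence (fun n => v (S n))); [exact HfL|].
    apply (CV_shift' v 1 L) in HL. intros e He. destruct (HL e He) as [N HN].
    exists N. intros n Hn. rewrite <- Nat.add_1_r. now apply HN. }
  pose proof (f_lt_id L ltac:(lra)). lra.
Qed.

Lemma two_step_iterate_cv_0 (x : nat -> R) :
  (forall n, x (S (S n)) = f (x n)) -> 0 <= x 0%nat < M -> 0 <= x 1%nat < M -> Un_cv x 0.
Proof.
  intros Hx H0 H1. apply Un_cv_even_odd.
  - apply iterate_cv_0; [|exact H0].
    intro n. replace (2 * S n)%nat with (S (S (2 * n))) by lia. apply Hx.
  - apply iterate_cv_0; [|exact H1].
    intro n. replace (S (2 * S n)) with (S (S (S (2 * n)))) by lia. apply Hx.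
Qed.

End IterationBelowIdentity.

Section Orbits.

Variables lam s r : R.
Hypothesis s_gt0 : 0 < s.

Lemma orbit_fst_S x0 y0 n :
  fst (orbit lam s r x0 y0 (S n)) = s * snd (orbit lam s r x0 y0 n).
Proof. simpl. now destruct (orbit lam s r x0 y0 n). Qed.

Lemma orbit_fst_SS x0 y0 n :
  fst (orbit lam s r x0 y0 (S (S n))) = fA lam (r + ln s) (fst (orbit lam s r x0 y0 n)).
Proof.
  simpl. destruct (orbit lam s r x0 y0 n) as [x y]. simpl. unfold fA.
  replace (r + ln s - x) with ((r - x) + ln s) by ring.
  rewrite exp_plus, exp_ln by exact s_gt0. ring.
Qed.

Lemma conv_origin_of_fst_cv x0 y0 :
  Un_cv (fun n => fst (orbit lam s r x0 y0 n)) 0 -> conv_origin lam s r x0 y0.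
Proof.
  intros Hx. split; [exact Hx|].
  intros eps Heps. destruct (Hx (eps * s) ltac:(nra)) as [N HN]. exists N. intros n Hn.
  specialize (HN (S n) ltac:(lia)). rewrite orbit_fst_S in HN. unfold R_dist in *.
  rewrite Rminus_0_r in *. rewrite Rabs_mult, (Rabs_right s) in HN by lra. nra.
Qed.

Lemma orbit_cv_origin M x0 y0 :
  (forall u, 0 < u < M -> fA lam (r + ln s) u < u) ->
  0 <= x0 < M -> 0 <= s * y0 < M -> conv_origin lam s r x0 y0.
Proof.
  intros Hf Hx Hy. apply conv_origin_of_fst_cv.
  apply (two_step_iterate_cv_0 (fA lam (r + ln s)) M).
  - apply fA_0.
  - apply fA_ge0.
  - exact Hf.
  - intros u Hu. apply fA_continuity_pt. lra.
  - apply orbit_fst_SS.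
  - exact Hx.
  - rewrite orbit_fst_S. exact Hy.
Qed.

Lemma orbit_not_cv_origin v w x0 y0 : 0 < v ->
  (forall u, v <= u <= w -> v <= fA lam (r + ln s) u <= w) ->
  v <= x0 <= w \/ v <= s * y0 <= w -> ~ conv_origin lam s r x0 y0.
Proof.
  intros Hv Hinv Hstart [Hcv _].
  assert (keeps : forall n0, v <= fst (orbit lam s r x0 y0 n0) <= w ->
            forall k, v <= fst (orbit lam s r x0 y0 (n0 + 2 * k)%nat)).
  { intros n0 H0 k.
    apply (two_step_invariant (fA lam (r + ln s)) (fun u => v <= u <= w)
             (fun n => fst (orbit lam s r x0 y0 n)) n0 Hinv (orbit_fst_SS x0 y0) H0). }
  destruct Hstart as [H0 | H1].
  - exact (not_Un_cv_0_of_ge _ 0 v Hv (keeps 0%nat H0) Hcv).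
  - refine (not_Un_cv_0_of_ge _ 1 v Hv (keeps 1%nat _) Hcv).
    now rewrite orbit_fst_S.
Qed.

End Orbits.

Fixpoint two_step_pairs (f : R -> R) (x0 x1 : R) (n : nat) : R * R :=
  match n with
  | O => (x0, x1)
  | S k => let p := two_step_pairs f x0 x1 k in (snd p, f (fst p))
  end.

Lemma scalar_sol_cv_0 lam a M x0 x1 :
  (forall u, 0 < u < M -> fA lam a u < u) -> 0 <= x0 < M -> 0 <= x1 < M ->
  exists x, scalar_sol lam a x /\ x 0%nat = x0 /\ x 1%nat = x1 /\ Un_cv x 0.
Proof.
  intros Hf H0 H1. exists (fun n => fst (two_step_pairs (fA lam a) x0 x1 n)).
  assert (Hsol : scalar_sol lam a (fun n => fst (two_step_pairs (fA lam a) x0 x1 n)))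
    by (intro n; reflexivity).
  split; [exact Hsol|]. split; [reflexivity|]. split; [reflexivity|].
  apply (two_step_iterate_cv_0 (fA lam a) M); try assumption.
  - apply fA_0.
  - apply fA_ge0.
  - intros u Hu. apply fA_continuity_pt. lra.
Qed.

Lemma scalar_fixed_iff lam a x : scalar_fixed lam a x <-> 0 < x /\ fA lam a x = x.
Proof.
  unfold scalar_fixed, scalar_sol. split.
  - intros [Hx Hsol]. split; [exact Hx|]. symmetry. exact (Hsol O).
  - intros [Hx Fx]. split; [exact Hx|]. intro n. symmetry. exact Fx.
Qed.

Lemma scalar_sol_alternating lam a p q :
  fA lam a p = p -> fA lam a q = q -> scalar_sol lam a (fun n => if Nat.even n then p else q).
Proof. intros Fp Fq n. simpl. now destruct (Nat.even n). Qed.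

Lemma scalar_sol_near_cv_0 lam a us p q : 0 < us ->
  (forall u, 0 < u < us -> fA lam a u < u) ->
  (p = 0 /\ q = us) \/ (p = us /\ q = 0) ->
  forall delta, 0 < delta ->
  exists x0 x1, 0 <= x0 /\ 0 <= x1 /\ sqrt ((x0 - p) ^ 2 + (x1 - q) ^ 2) < delta /\
    exists x, scalar_sol lam a x /\ x 0%nat = x0 /\ x 1%nat = x1 /\ Un_cv x 0.
Proof.
  intros Hus Hf Hpq delta Hdelta.
  set (e := Rmin delta us / 2).
  assert (He : 0 < e < us /\ sqrt (e ^ 2) < delta).
  { pose proof (Rmin_l delta us). pose proof (Rmin_r delta us).
    pose proof (Rmin_pos delta us Hdelta Hus).
    rewrite sqrt_pow2 by (unfold e; lra). unfold e. lra. }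
  destruct Hpq as [[-> ->] | [-> ->]].
  - exists 0, (us - e). split; [lra|]. split; [lra|]. split.
    + replace ((0 - 0) ^ 2 + (us - e - us) ^ 2) with (e ^ 2) by ring. tauto.
    + apply (scalar_sol_cv_0 lam a us); [exact Hf | lra | lra].
  - exists (us - e), 0. split; [lra|]. split; [lra|]. split.
    + replace ((us - e - us) ^ 2 + (0 - 0) ^ 2) with (e ^ 2) by ring. tauto.
    + apply (scalar_sol_cv_0 lam a us); [exact Hf | lra | lra].
Qed.

Lemma all_orbits_cv_origin_iff lam s r : 1 < lam -> 0 < s ->
  ((forall x0 y0, 0 <= x0 -> 0 <= y0 -> conv_origin lam s r x0 y0) <->
   r + ln s < (lam - 1) * (1 - ln (lam - 1))).
Proof.
  intros Hlam Hs. split.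
  - intros Hall. destruct (Rlt_le_dec (r + ln s) ((lam - 1) * (1 - ln (lam - 1)))) as [|Ha];
      [assumption | exfalso].
    destruct (fA_fixed_point_exists lam (r + ln s) Hlam Ha) as [u [Hu Fu]].
    apply (orbit_not_cv_origin lam s r Hs u u u 0 Hu); [| lra | apply Hall; lra].
    intros v Hv. replace v with u by lra. lra.
  - intros Ha x0 y0 Hx Hy. apply (orbit_cv_origin lam s r Hs (x0 + s * y0 + 1)); [|nra|nra].
    intros u Hu. apply fA_lt_id_iff; [lra|].
    pose proof (ln_fA_ratio_le_peak lam (r + ln s) u Hlam ltac:(lra)). lra.
Qed.

Theorem mainTheorem6 (lam s r : R) (Hlam : 1 < lam) (Hs0 : 0 < s) (Hs1 : s <= 1) :
  let a := r + ln s in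
  let c := (lam - 1) * (1 - ln (lam - 1)) in
  (* (a) *)
  ((forall x0 y0 : R, 0 <= x0 -> 0 <= y0 -> conv_origin lam s r x0 y0) <-> a < c) /\
  (forall us ub : R, c < a -> 0 < us -> us < ub ->
     fA lam a us = us -> fA lam a ub = ub ->
     (* (b) *)
     ((forall x : R, scalar_fixed lam a x <-> (x = us \/ x = ub)) /\
      (forall x0 y0 : R, 0 <= x0 < us -> 0 <= y0 < us / s -> conv_origin lam s r x0 y0)) /\
     (* (c) *)
     (a <= lam - (lam - 1) * ln lam ->
      forall x0 y0 : R, 0 <= x0 -> 0 <= y0 ->
        (us <= x0 <= ub \/ us <= s * y0 <= ub) -> ~ conv_origin lam s r x0 y0) /\
     (* (d) *)
     (scalar_sol lam a (fun n => if Nat.even n then 0 else us) /\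
      scalar_sol lam a (fun n => if Nat.even n then us else 0) /\
      (forall delta : R, 0 < delta ->
         exists x0 x1 : R, 0 <= x0 /\ 0 <= x1 /\
           sqrt ((x0 - 0) ^ 2 + (x1 - us) ^ 2) < delta /\
           exists x : nat -> R, scalar_sol lam a x /\ x 0%nat = x0 /\ x 1%nat = x1 /\
             Un_cv x 0) /\
      (forall delta : R, 0 < delta ->
         exists x0 x1 : R, 0 <= x0 /\ 0 <= x1 /\
           sqrt ((x0 - us) ^ 2 + (x1 - 0) ^ 2) < delta /\
           exists x : nat -> R, scalar_sol lam a x /\ x 0%nat = x0 /\ x 1%nat = x1 /\
             Un_cv x 0))).
Proof.
  intros a c.
  split; [exact (all_orbits_cv_origin_iff lam s r Hlam Hs0)|].
  intros us ub _ Hus Hub Fus Fub.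
  pose proof (fA_lt_id_below_allee lam a us ub Hus Hub Fus Fub) as below.
  split; [split|split].
  - intros x. rewrite scalar_fixed_iff. split.
    + intros [Hx Fx]. now apply (fA_eq_id_iff_two_fixed lam a us ub Hus Hub Fus Fub).
    + intros Hx. assert (Hx0 : 0 < x) by (destruct Hx; lra).
      split; [exact Hx0|]. now apply (fA_eq_id_iff_two_fixed lam a us ub Hus Hub Fus Fub).
  - intros x0 y0 Hx Hy. apply (orbit_cv_origin lam s r Hs0 us x0 y0 below Hx).
    split; [nra|]. destruct Hy as [_ Hy]. apply (Rmult_lt_compat_l s) in Hy; [|exact Hs0].
    replace (s * (us / s)) with us in Hy by (field; lra). exact Hy.
  - intros Ha x0 y0 _ _. apply (orbit_not_cv_origin lam s r Hs0 us ub x0 y0 Hus).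
    intros u Hu. apply (fA_maps_two_fixed_interval lam a us ub Hus Fus Fub); [|exact Hu].
    apply (upper_fixed_le_lam lam a us ub Hus Hub Fus Fub); lra.
  - repeat split.
    + apply scalar_sol_alternating; [apply fA_0 | exact Fus].
    + apply scalar_sol_alternating; [exact Fus | apply fA_0].
    + apply (scalar_sol_near_cv_0 lam a us 0 us Hus below). now left.
    + apply (scalar_sol_near_cv_0 lam a us us 0 Hus below). now right.
Qed.
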